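(* Let $\mathcal{A}$ be a finite alphabet, $\Omega=\mathcal{A}^{\mathbb{N}}$, and $\mu$ a Borel probability measure on $\Omega$ (not necessarily shift-invariant). For every recursive reversible coding procedure $Z:\mathcal{A}^*\to\{0,1\}^*$ and every real $q>0$, $$h^q_Z(\Omega)\ge h^q_{AIC}(\Omega).$$
   Context: For $\omega\in\Omega$, $\omega^n$ is the string of its first $n$ symbols. A recursive reversible coding procedure is an injective recursive map $Z:\mathcal{A}^*\to\{0,1\}^*$, and $I_Z(s)=|Z(s)|$. $AIC(s)=\min\{|P|:C(P)=s\}$ for a fixed universal computing machine $C$. For an information function $I\in\{AIC,I_Z\}$, the $q$-entropy is $h^q(\Omega)=\limsup_{n\to\infty}\int_\Omega\frac{I(\omega^n)}{n^q}\,d\mu$; $h^q_{AIC}$ and $h^q_Z$ denote it for $I=AIC$ and $I=I_Z$ respectively. *)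

From HB Require Import structures.
From mathcomp Require Import all_boot all_order all_algebra.
From mathcomp Require Import all_classical all_reals all_analysis.
Set Implicit Arguments. Unset Strict Implicit. Unset Printing Implicit Defensive.
Import Order.TTheory GRing.Theory Num.Theory.
Local Open Scope classical_set_scope.

Inductive prf : Type :=
| PZero : prf
| PSucc : prf
| PProj : nat -> prf                (* v |-> i-th component (0 if absent) *)
| PComp : prf -> list prf -> prf
| PPrim : prf -> prf -> prf
| PMu   : prf -> prf.

Inductive eval : prf -> seq nat -> nat -> Prop :=
| ev_zero v : eval PZero v 0
| ev_succ x v : eval PSucc (x :: v) x.+1
| ev_proj i v : eval (PProj i) v (nth 0 v i)
| ev_comp f gs v ws y : evals gs v ws -> eval f ws y -> eval (PComp f gs) v y
| ev_prim0 f g v y : eval f v y -> eval (PPrim f g) (0 :: v) y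
| ev_primS f g n v r y :
    eval (PPrim f g) (n :: v) r -> eval g (n :: r :: v) y ->
    eval (PPrim f g) (n.+1 :: v) y
| ev_mu f v n :
    eval f (n :: v) 0 ->
    (forall m, m < n -> exists k, eval f (m :: v) k.+1) ->
    eval (PMu f) v n
with evals : seq prf -> seq nat -> seq nat -> Prop :=
| evs_nil v : evals [::] v [::]
| evs_cons g gs v w ws : eval g v w -> evals gs v ws -> evals (g :: gs) v (w :: ws).

(* Objects of countable types (finite strings) are encoded by [pickle]. *)

Definition recursive_fun (X Y : countType) (f : X -> Y) : Prop :=
  exists c : prf, forall x, eval c [:: pickle x] (pickle (f x)).

(* A (partial) computing machine from binary programs to strings over A is
   given by a mu-recursive program; [runs c P s] : machine c on program P
   halts with output s. *)
Definition runs (A : countType) (c : prf) (P : seq bool) (s : seq A) : Prop :=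
  eval c [:: pickle P] (pickle s).

Definition universal_machine (A : countType) (c : prf) : Prop :=
  forall m : prf, exists p : seq bool,
    forall (P : seq bool) (s : seq A), runs c (p ++ P) s <-> runs m P s.

(* Algorithmic information content AIC(s) = min { |P| : C(P) = s }
   (set to 0 if no program outputs s, which cannot happen for universal C). *)
Definition AIC_at (A : countType) (c : prf) (s : seq A) : pred nat :=
  fun n => `[< exists P : seq bool, size P = n /\ runs c P s >].

Definition AIC (A : countType) (c : prf) (s : seq A) : nat :=
  match pselect (exists n, AIC_at c s n) with
  | left h => ex_minn h
  | right _ => 0
  end.

Definition recursive_reversible_coding (A : countType)
    (Z : seq A -> seq bool) : Prop :=
  injective Z /\ recursive_fun Z.

Definition I_Z (A : countType) (Z : seq A -> seq bool) (s : seq A) : nat :=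
  size (Z s).

(* [a0] only serves to make the (nonempty) alphabet a pointed type. *)
Definition seqsp (A : finType) (a0 : A) := nat -> A.

HB.instance Definition _ (A : finType) (a0 : A) :=
  gen_eqMixin (seqsp a0).
HB.instance Definition _ (A : finType) (a0 : A) :=
  gen_choiceMixin (seqsp a0).
HB.instance Definition _ (A : finType) (a0 : A) :=
  isPointed.Build (seqsp a0) (fun _ => a0).

(* Since A is finite
   and discrete, the product topology on A^N has the cylinders as a
   countable base, so the generated sigma-algebra is the Borel one. *)
Definition cylinders (A : finType) (a0 : A) : set (set (seqsp a0)) :=
  [set [set w : seqsp a0 | w na.1 = na.2] | na in [set: nat * A]].

Arguments cylinders {A} a0.
Definition Omega (A : finType) (a0 : A) := g_sigma_algebraType (cylinders a0).

Definition prefix (A : finType) (a0 : A) (w : Omega a0) (n : nat) : seq A :=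
  mkseq w n.

Definition q_entropy (R : realType) (A : finType) (a0 : A)
    (mu : probability (Omega a0) R) (I : seq A -> nat) (q : R) : \bar R :=
  limn_esup (fun n => (\int[mu]_w ((I (prefix w n))%:R / (n%:R `^ q))%:E)%E).

From Pilot Require Import Defs.
From HB Require Import structures.
From mathcomp Require Import all_boot all_order all_algebra.
From mathcomp Require Import all_classical all_reals all_analysis.
From mathcomp Require Import measurable_realfun zify.
Import Order.TTheory GRing.Theory Num.Theory.
Set Implicit Arguments. Unset Strict Implicit. Unset Printing Implicit Defensive.

(* Proof idea: the injective recursive coding [Z] is inverted by a machine
   that, on input [P], searches for the least word [s] with [Z s = P].  The
   universal machine simulates it after a fixed prefix [p], hence
   [AIC s <= |Z s| + |p|] for every word [s].  Integrating over [Omega] and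
   dividing by [n ^ q], the constant contributes [|p| / n ^ q], which tends
   to [0] and disappears in the limsup. *)

Definition computes (c : prf) (F : seq nat -> nat) := forall v, Defs.eval c v (F v).

Section Programs.
Implicit Types (a b f g x : prf) (A B F G X : seq nat -> nat) (v : seq nat).

Lemma eval_comp1 f g v w y :
  Defs.eval g v w -> Defs.eval f [:: w] y -> Defs.eval (PComp f [:: g]) v y.
Proof. by move=> hg; apply: ev_comp; apply: evs_cons hg (evs_nil _). Qed.

Lemma eval_comp2 f g h v w1 w2 y :
  Defs.eval g v w1 -> Defs.eval h v w2 -> Defs.eval f [:: w1; w2] y ->
  Defs.eval (PComp f [:: g; h]) v y.
Proof. by move=> hg hh; apply: ev_comp; apply: evs_cons hg (evs_cons hh (evs_nil _)). Qed.

Lemma computes_zero : computes PZero (fun _ => 0).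
Proof. by move=> v; apply: ev_zero. Qed.

Lemma computes_proj i : computes (PProj i) (fun v => nth 0 v i).
Proof. by move=> v; apply: ev_proj. Qed.

Definition prf_succ g := PComp PSucc [:: g].

Lemma computes_succ g G : computes g G -> computes (prf_succ g) (fun v => (G v).+1).
Proof. by move=> hg v; apply: eval_comp1 (hg v) (ev_succ _ _). Qed.

Fixpoint prf_const k := if k is k'.+1 then prf_succ (prf_const k') else PZero.

Lemma computes_const k : computes (prf_const k) (fun _ => k).
Proof. by elim: k => [|k IH] /=; [apply: computes_zero | apply: computes_succ]. Qed.

Fixpoint primrec F G n w := if n is n'.+1 then G [:: n', primrec F G n' w & w] else F w.

Lemma eval_prim f F g G n w : computes f F -> computes g G ->
  Defs.eval (PPrim f g) (n :: w) (primrec F G n w).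
Proof.
move=> hf hg; elim: n => [|n IH] /=; first exact: ev_prim0.
exact: ev_primS IH (hg _).
Qed.

Lemma computes_prim f F g G a A b B :
  computes f F -> computes g G -> computes a A -> computes b B ->
  computes (PComp (PPrim f g) [:: a; b]) (fun v => primrec F G (A v) [:: B v]).
Proof. by move=> hf hg ha hb v; apply: eval_comp2 (ha v) (hb v) (eval_prim _ _ hf hg). Qed.

Lemma eval_mu f F v n : computes f F -> F (n :: v) = 0 ->
  (forall m, m < n -> F (m :: v) != 0) -> Defs.eval (PMu f) v n.
Proof.
move=> hf Fn0 Fm; apply: ev_mu; first by rewrite -Fn0.
move=> m /Fm; case Em: (F (m :: v)) => [|k] // _.
by exists k; rewrite -Em.
Qed.

Definition prf_add a b := PComp (PPrim (PProj 0) (prf_succ (PProj 1))) [:: a; b].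

Lemma computes_add a A b B : computes a A -> computes b B ->
  computes (prf_add a b) (fun v => A v + B v).
Proof.
move=> ha hb v; have := computes_prim (computes_proj 0)
  (computes_succ (computes_proj 1)) ha hb v.
by congr Defs.eval; elim: (A v) => //= n ->.
Qed.

Definition prf_pred x := PComp (PPrim PZero (PProj 0)) [:: x; PZero].

Lemma computes_pred x X : computes x X -> computes (prf_pred x) (fun v => (X v).-1).
Proof.
move=> hx v.
by have := computes_prim computes_zero (computes_proj 0) hx computes_zero v; case: (X v).
Qed.

Definition prf_sub a b := PComp (PPrim (PProj 0) (prf_pred (PProj 1))) [:: b; a].

Lemma computes_sub a A b B : computes a A -> computes b B ->
  computes (prf_sub a b) (fun v => A v - B v).
Proof.
move=> ha hb v; have := computes_prim (computes_proj 0)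
  (computes_pred (computes_proj 1)) hb ha v.
by congr Defs.eval; elim: (B v) => [|n /= ->]; rewrite ?subn0 ?subnS.
Qed.

Definition prf_mul a b := PComp (PPrim PZero (prf_add (PProj 1) (PProj 2))) [:: a; b].

Lemma computes_mul a A b B : computes a A -> computes b B ->
  computes (prf_mul a b) (fun v => A v * B v).
Proof.
move=> ha hb v; have := computes_prim computes_zero
  (computes_add (computes_proj 1) (computes_proj 2)) ha hb v.
by congr Defs.eval; elim: (A v) => //= n ->; rewrite mulSn addnC.
Qed.

Definition prf_eq a b := prf_sub (prf_const 1) (prf_add (prf_sub a b) (prf_sub b a)).

Lemma computes_eq a A b B : computes a A -> computes b B ->
  computes (prf_eq a b) (fun v => nat_of_bool (A v == B v)).
Proof.
move=> ha hb v; have := computes_sub (computes_const 1)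
  (computes_add (computes_sub ha hb) (computes_sub hb ha)) v.
by congr Defs.eval; case: eqP; lia.
Qed.

(* [n.+1 %/ d] is [n %/ d], plus one exactly when [(n %/ d).+1 * d = n.+1]. *)
Definition prf_div a b :=
  PComp (PPrim PZero (prf_add (PProj 1)
    (prf_eq (prf_mul (prf_succ (PProj 1)) (PProj 2)) (prf_succ (PProj 0))))) [:: a; b].

Lemma computes_div a A b B : computes a A -> computes b B -> (forall v, 0 < B v) ->
  computes (prf_div a b) (fun v => A v %/ B v).
Proof.
move=> ha hb B_gt0 v; have := computes_prim computes_zero
  (computes_add (computes_proj 1) (computes_eq
    (computes_mul (computes_succ (computes_proj 1)) (computes_proj 2))
    (computes_succ (computes_proj 0)))) ha hb v.
have d_gt0 := B_gt0 v; congr Defs.eval; elim: (A v) => [|n /= ->]; first by rewrite div0n.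
rewrite divnS // addnC; congr (nat_of_bool _ + _).
apply/eqP/idP => [<-|dvd]; first by rewrite dvdn_mull.
by rewrite -[RHS](divnK dvd) divnS // dvd.
Qed.

Definition prf_mod a b := prf_sub a (prf_mul (prf_div a b) b).

Lemma computes_mod a A b B : computes a A -> computes b B -> (forall v, 0 < B v) ->
  computes (prf_mod a b) (fun v => A v %% B v).
Proof.
move=> ha hb B_gt0 v.
have := computes_sub ha (computes_mul (computes_div ha hb B_gt0) hb) v.
by rewrite {1}(divn_eq (A v) (B v)) addKn.
Qed.

Fixpoint prf_sum (S : seq nat) (body : nat -> prf) :=
  if S is a :: S' then prf_add (body a) (prf_sum S' body) else PZero.

Lemma computes_sum (S : seq nat) (body : nat -> prf) (F : nat -> seq nat -> nat) :
  (forall i, computes (body i) (F i)) ->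
  computes (prf_sum S body) (fun v => \sum_(i <- S) F i v).
Proof.
move=> hbody; elim: S => [|i S IH] v /=; first by rewrite big_nil; apply: computes_zero.
by rewrite big_cons; apply: (computes_add (hbody i) IH).
Qed.

End Programs.

Lemma code_cons a l : CodeSeq.code (a :: l) = 2 ^ a * (CodeSeq.code l).*2.+1.
Proof. by []. Qed.

Lemma size_le_code l : size l <= CodeSeq.code l.
Proof.
elim: l => //= a l IH; rewrite -/(CodeSeq.code l).
by have := expn_gt0 2 a; rewrite -muln2; nia.
Qed.

Lemma pow2_mul_odd_inj a b m n : 2 ^ a * m.*2.+1 = 2 ^ b * n.*2.+1 -> a = b.
Proof.
have odd_coprime k : coprime 2 k.*2.+1 by rewrite coprime2n /= odd_double.
move=> /(congr1 (logn 2)).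
by rewrite !lognM ?expn_gt0 // !pfactorK // !logn_coprime ?odd_coprime ?addn0.
Qed.

Definition code_head_is i x := x %% 2 ^ i.+1 == 2 ^ i.

Lemma code_head_is_cons i a l : code_head_is i (CodeSeq.code (a :: l)) = (i == a).
Proof.
rewrite /code_head_is code_cons; set c := CodeSeq.code l.
apply/eqP/eqP => [mod_eq|->]; last first.
  by rewrite expnSr -muln_modr modn2 /= odd_double muln1.
apply/esym/(@pow2_mul_odd_inj a i c (2 ^ a * c.*2.+1 %/ 2 ^ i.+1)).
rewrite {1}(divn_eq (2 ^ a * c.*2.+1) (2 ^ i.+1)) mod_eq expnS.
set q := _ %/ _; rewrite -!muln2; nia.
Qed.

Section StripHead.
Variable S : seq nat.
Hypothesis S_uniq : uniq S.

(* Drops the first item of the sequence coded by [x] if it lies in [S]: at most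
   one [i] satisfies [code_head_is i x], so each sum has at most one nonzero term. *)
Definition strip_head x :=
  \sum_(i <- S) code_head_is i x * (x %/ 2 ^ i.+1) +
  x * (1 - \sum_(i <- S) code_head_is i x).

Lemma sum_eq_indicator a (F : nat -> nat) :
  \sum_(i <- S) (i == a) * F i = (a \in S) * F a.
Proof.
elim: S S_uniq => [|b S' IH] /=; first by rewrite big_nil.
case/andP=> bS' uS'; rewrite big_cons IH // in_cons eq_sym.
by case: eqVneq => [->|_]; rewrite ?(negbTE bS') /= ?mul0n ?addn0.
Qed.

Lemma strip_head_cons a l :
  strip_head (CodeSeq.code (a :: l)) =
  if a \in S then CodeSeq.code l else CodeSeq.code (a :: l).
Proof.
rewrite /strip_head.
under eq_bigr do rewrite code_head_is_cons.
under [X in _ * (1 - X)]eq_bigr do rewrite code_head_is_cons -[nat_of_bool _]muln1.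
rewrite !sum_eq_indicator code_cons.
have -> : 2 ^ a * (CodeSeq.code l).*2.+1 %/ 2 ^ a.+1 = CodeSeq.code l.
  by rewrite expnSr divnMl ?expn_gt0 // -muln2 -addn1 divnMDl // divn_small // addn0.
by case: (a \in S); rewrite /= ?mul1n ?muln1 ?subnn ?muln0 ?addn0 ?mul0n ?subn0.
Qed.

Lemma strip_head0 : strip_head 0 = 0.
Proof. by rewrite /strip_head mul0n addn0 big1 // => i _; rewrite div0n muln0. Qed.

Lemma iter_strip_head_eq0 l k : size l <= k ->
  (iter k strip_head (CodeSeq.code l) == 0) = all (mem S) l.
Proof.
elim: l k => [|a l IH] k /= size_le; first by rewrite iter_fix ?strip_head0.
have code_neq0 : CodeSeq.code (a :: l) != 0 by rewrite code_cons muln_eq0 expn_eq0.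
case aS: (a \in S); last by rewrite iter_fix ?strip_head_cons ?aS // (negbTE code_neq0).
by case: k size_le => // k size_le; rewrite iterSr strip_head_cons aS IH.
Qed.

(* A computable retraction of [nat] onto the codes of sequences over [S];
   [n] strips suffice since a sequence is never longer than its code. *)
Definition proj_code n := n * (iter n strip_head n == 0).

Lemma proj_codeE n :
  proj_code n = if all (mem S) (CodeSeq.decode n) then n else 0.
Proof.
have size_le : size (CodeSeq.decode n) <= n.
  by have := size_le_code (CodeSeq.decode n); rewrite CodeSeq.decodeK.
rewrite /proj_code -{3}[n]CodeSeq.decodeK iter_strip_head_eq0 //.
by case: ifP; rewrite ?muln1 ?muln0.
Qed.

Definition prf_code_head_is i x :=
  prf_eq (prf_mod x (prf_const (2 ^ i.+1))) (prf_const (2 ^ i)).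

Lemma computes_code_head_is i x X : computes x X ->
  computes (prf_code_head_is i x) (fun v => code_head_is i (X v)).
Proof.
move=> hx; apply: computes_eq (computes_const _).
by apply: computes_mod hx (computes_const _) _ => v; rewrite expn_gt0.
Qed.

Definition prf_strip_head x :=
  prf_add
    (prf_sum S (fun i => prf_mul (prf_code_head_is i x) (prf_div x (prf_const (2 ^ i.+1)))))
    (prf_mul x (prf_sub (prf_const 1) (prf_sum S (fun i => prf_code_head_is i x)))).

Lemma computes_strip_head x X : computes x X ->
  computes (prf_strip_head x) (fun v => strip_head (X v)).
Proof.
move=> hx; have pow2_gt0 i (v : seq nat) : 0 < 2 ^ i.+1 by rewrite expn_gt0.
apply: computes_add.
- apply: computes_sum => i; apply: computes_mul (computes_code_head_is i hx) _.
  exact: computes_div hx (computes_const _) (pow2_gt0 i).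
- exact: computes_mul hx (computes_sub (computes_const 1)
    (computes_sum _ (fun i => computes_code_head_is i hx))).
Qed.

Definition prf_proj_code x :=
  prf_mul x (prf_eq (PComp (PPrim (PProj 0) (prf_strip_head (PProj 1))) [:: x; x]) PZero).

Lemma computes_proj_code x X : computes x X ->
  computes (prf_proj_code x) (fun v => proj_code (X v)).
Proof.
have iterE n y :
    primrec (fun w => nth 0 w 0) (fun w => strip_head (nth 0 w 1)) n [:: y] =
    iter n strip_head y by elim: n => //= n ->.
move=> hx v; have := computes_mul hx (computes_eq (computes_prim (computes_proj 0)
  (computes_strip_head (computes_proj 1)) hx hx) computes_zero) v.
by rewrite iterE.
Qed.

End StripHead.

Section WordCodes.
Variable A : finType.

Definition letter_codes : seq nat := [seq pickle a | a <- enum A].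

Lemma letter_codes_uniq : uniq letter_codes.
Proof. by rewrite map_inj_uniq ?enum_uniq //; apply: pcan_inj pickleK. Qed.

Definition word_of n : seq A := odflt [::] (unpickle n).

Definition proj_word := proj_code letter_codes.

Lemma pickle_wordE (s : seq A) : pickle s = CodeSeq.code (map pickle s).
Proof. by []. Qed.

Lemma all_letter_codes l :
  all (mem letter_codes) l -> exists s : seq A, l = map pickle s.
Proof.
elim: l => [|i l IH] /=; first by exists [::].
by case/andP=> /mapP[a _ ->] /IH[s ->]; exists (a :: s).
Qed.

Lemma proj_word_pickle (s : seq A) : proj_word (pickle s) = pickle s.
Proof.
rewrite /proj_word (proj_codeE letter_codes_uniq) pickle_wordE CodeSeq.codeK.
by rewrite all_map ifT //; apply/allP => a _; rewrite /= map_f ?mem_enum.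
Qed.

Lemma pickle_word_of_proj n : pickle (word_of (proj_word n)) = proj_word n.
Proof.
rewrite /proj_word (proj_codeE letter_codes_uniq).
case: ifP => // /all_letter_codes[s s_n].
by rewrite -[n]CodeSeq.decodeK s_n -pickle_wordE /word_of pickleK.
Qed.

End WordCodes.

Section Decoder.
Variables (A : finType) (Z : seq A -> seq bool) (cZ : prf).
Hypothesis Z_inj : injective Z.
Hypothesis cZ_computes_Z : forall s, Defs.eval cZ [:: pickle s] (pickle (Z s)).

Let prf_Z_of_word := PComp cZ [:: prf_proj_code (letter_codes A) (PProj 0)].

Let computes_Z_of_word :
  computes prf_Z_of_word (fun v => pickle (Z (word_of A (proj_word A (nth 0 v 0))))).
Proof.
move=> v; apply: eval_comp1 (computes_proj_code _ (computes_proj 0) v) _.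
have := cZ_computes_Z (word_of A (proj_word A (nth 0 v 0))).
by rewrite pickle_word_of_proj.
Qed.

(* On input [pickle P], find the least [k] such that [Z] maps the word coded by
   [proj_word A k] to [P], and output [proj_word A k].  Projecting first matters:
   [cZ] is only known to halt on codes of words. *)
Definition decoder := PComp (prf_proj_code (letter_codes A) (PProj 0))
  [:: PMu (prf_sub (prf_const 1) (prf_eq prf_Z_of_word (PProj 1)))].

Lemma runs_decoder s : runs decoder (Z s) s.
Proof.
pose found k := pickle (Z (word_of A (proj_word A k))) == pickle (Z s).
have found_s : found (pickle s) by rewrite /found proj_word_pickle /word_of pickleK.
case: (ex_minnP (ex_intro found _ found_s)) => k found_k k_min.
have word_k : word_of A (proj_word A k) = s.
  by apply/Z_inj/(pcan_inj pickleK)/eqP.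
rewrite /runs -{2}word_k pickle_word_of_proj.
apply: eval_comp1 _ (computes_proj_code _ (computes_proj 0) [:: k]).
apply: eval_mu (computes_sub (computes_const 1)
  (computes_eq computes_Z_of_word (computes_proj 1))) _ _.
- by rewrite /= -/(found k) found_k.
- move=> m lt_mk; rewrite /= -/(found m); case found_m: (found m) => //.
  by have := k_min m found_m; rewrite leqNgt lt_mk.
Qed.

End Decoder.

Lemma recursive_reversible_coding_inverse (A : finType) (Z : seq A -> seq bool) :
  recursive_reversible_coding Z -> exists m, forall s, runs m (Z s) s.
Proof. by case=> Z_inj [cZ cZ_Z]; exists (decoder A cZ) => s; apply: runs_decoder. Qed.

Lemma AIC_le_size (A : countType) (C : prf) (P : seq bool) (s : seq A) :
  runs C P s -> AIC C s <= size P.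
Proof.
move=> CPs; rewrite /AIC; case: pselect => // ex.
by case: ex_minnP => n _; apply; apply/asboolP; exists P.
Qed.

Lemma AIC_le_invariance (A : countType) (C m : prf) : universal_machine A C ->
  exists c, forall P (s : seq A), runs m P s -> AIC C s <= size P + c.
Proof.
move=> /(_ m)[p Cp]; exists (size p) => P s mPs.
by rewrite addnC -size_cat; apply/AIC_le_size/Cp.
Qed.

Local Open Scope classical_set_scope.
Local Open Scope ring_scope.

Section PrefixMeasurable.
Variables (A : finType) (a0 : A).

Lemma measurable_coord_eq i (x : A) : measurable [set w : Omega a0 | w i = x].
Proof. by apply: sub_sigma_algebra; exists (i, x). Qed.

Lemma measurable_prefix_eq n (s : seq A) :
  measurable [set w : Omega a0 | Defs.prefix w n = s].
Proof.
have [size_s|size_s] := eqVneq (size s) n; last first.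
  rewrite (_ : [set w | _] = set0); first exact: measurable0.
  by apply/seteqP; split => w //= ws; rewrite -ws size_mkseq eqxx in size_s.
rewrite (_ : [set w | _] = \bigcap_i
    (if (i < n)%N then [set w : Omega a0 | w i = nth a0 s i] else setT)).
  by apply: bigcapT_measurable => i; case: ifP => _; [apply: measurable_coord_eq|].
apply/seteqP; split => w /=.
- by move=> <- i _; case: ifP => // lt_in; rewrite nth_mkseq.
- move=> ws; apply: (@eq_from_nth _ a0); first by rewrite size_mkseq size_s.
  move=> i; rewrite size_mkseq => lt_in; rewrite nth_mkseq //.
  by have := ws i I; rewrite lt_in.
Qed.

Lemma measurable_fun_prefix (R : realType) n (h : seq A -> R) :
  measurable_fun setT (fun w : Omega a0 => h (Defs.prefix w n)).
Proof.
move=> _ Y mY; rewrite setTI.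
rewrite (_ : _ @^-1` Y = \bigcup_(k in [set k | Y (h (word_of A k))])
    [set w : Omega a0 | Defs.prefix w n = word_of A k]).
  by apply: bigcup_measurable => k _; apply: measurable_prefix_eq.
apply/seteqP; split => w /=.
- by move=> Yw; exists (pickle (Defs.prefix w n)); rewrite /= /word_of pickleK.
- by case=> k /= Yk ->.
Qed.

End PrefixMeasurable.

Lemma le_limn_esup_add_null (R : realType) (u v : (\bar R)^nat) (c : R^nat) :
  (forall e : R, 0 < e -> exists N, forall n, (N <= n)%N -> c n <= e) ->
  (forall n, (u n <= v n + (c n)%:E)%E) -> (limn_esup u <= limn_esup v)%E.
Proof.
move=> c_null u_le; apply/lee_addgt0Pr => e e_gt0; have [N c_le] := c_null e e_gt0.
have u_le_esups n : (N <= n)%N -> (limn_esup u <= esups v n + e%:E)%E.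
  move=> le_Nn; rewrite limn_esup_lim.
  apply: (@le_trans _ _ (esups u n)).
    apply: lime_le; first exact: is_cvg_esups.
    by exists n => // m /= le_nm; apply: nonincreasing_esups.
  apply: ge_ereal_sup => _ [k /= le_nk <-].
  apply: (le_trans (u_le k)); apply: leeD; first by apply: ereal_sup_ubound; exists k.
  by rewrite lee_fin c_le // (leq_trans le_Nn).
rewrite -leeBlDr // [limn_esup v]limn_esup_lim.
apply: lime_ge; first exact: is_cvg_esups.
by exists N => // n le_Nn; rewrite leeBlDr // u_le_esups.
Qed.

Lemma div_powR_eventually_le (R : realType) (K q e : R) : 0 <= K -> 0 < q -> 0 < e ->
  exists N, forall n, (N <= n)%N -> K / n%:R `^ q <= e.
Proof.
move=> K_ge0 q_gt0 e_gt0; set t := (K / e) `^ q^-1.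
exists (Num.bound t) => n le_Nn.
have t_le_n : t <= n%:R.
  by apply: le_trans (ltW (archi_boundP (powR_ge0 _ _))) _; rewrite ler_nat.
have Ke_le : K / e <= n%:R `^ q.
  have t_pow_q : t `^ q = K / e.
    by rewrite -powRrM mulVf ?lt0r_neq0 // powRr1 // divr_ge0 // ltW.
  by rewrite -t_pow_q; apply: ge0_ler_powR; rewrite ?nnegrE ?powR_ge0 // ltW.
have [->|d_neq0] := eqVneq (n%:R `^ q) 0; first by rewrite invr0 mulr0 ltW.
by rewrite ler_pdivrMr ?lt_def ?d_neq0 ?powR_ge0 // mulrC -ler_pdivrMr.
Qed.

Section QEntropy.
Variables (R : realType) (A : finType) (a0 : A) (mu : probability (Omega a0) R).

Lemma integral_prefix_le_add (I J : seq A -> nat) (c n : nat) (d : R) :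
  (forall s, (I s <= J s + c)%N) -> 0 <= d ->
  (\int[mu]_w ((I (Defs.prefix w n))%:R / d)%:E <=
   \int[mu]_w ((J (Defs.prefix w n))%:R / d)%:E + (c%:R / d)%:E)%E.
Proof.
move=> IJ d_ge0; have div_ge0 k : (0 <= (k%:R / d)%:E)%E by rewrite lee_fin divr_ge0.
have mprefix (h : seq A -> R) :
    measurable_fun setT (EFin \o fun w : Omega a0 => h (Defs.prefix w n)).
  by apply/measurable_EFinP; apply: measurable_fun_prefix.
apply: (@le_trans _ _
  (\int[mu]_w ((J (Defs.prefix w n))%:R / d + c%:R / d)%:E)%E).
  apply: ge0_le_integral => //.
  - exact: (mprefix (fun s => (I s)%:R / d)).
  - exact: (mprefix (fun s => (J s)%:R / d + c%:R / d)).
  - by move=> w _; rewrite lee_fin -mulrDl ler_wpM2r ?invr_ge0 // -natrD ler_nat.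
under eq_integral do rewrite EFinD.
rewrite ge0_integralD //; last exact: (mprefix (fun s => (J s)%:R / d)).
by rewrite integral_cst // [X in (_ * X)%E]probability_setT mule1.
Qed.

Lemma q_entropy_le_add (I J : seq A -> nat) (c : nat) (q : R) : 0 < q ->
  (forall s, (I s <= J s + c)%N) -> (q_entropy mu I q <= q_entropy mu J q)%E.
Proof.
move=> q_gt0 IJ; apply: (@le_limn_esup_add_null _ _ _ (fun n => c%:R / n%:R `^ q)).
  by move=> e; apply: div_powR_eventually_le.
by move=> n; apply: integral_prefix_le_add; rewrite ?powR_ge0.
Qed.

End QEntropy.

Theorem theorem5p2 (R : realType) (A : finType) (a0 : A)
    (mu : probability (Omega a0) R)
    (C : prf) (hC : universal_machine A C)
    (Z : seq A -> seq bool) (hZ : recursive_reversible_coding Z)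
    (q : R) (hq : 0 < q) :
  (q_entropy mu (AIC C) q <= q_entropy mu (I_Z Z) q)%E.
Proof.
have [decoder decoder_Z] := recursive_reversible_coding_inverse hZ.
have [c AIC_le] := AIC_le_invariance decoder hC.
by apply: (q_entropy_le_add mu hq) => s; apply: AIC_le (decoder_Z s).
Qed.
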